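(* Let $\Delta$ be a finite, flag, simply connected simplicial complex and $\mathcal{P}_H$ as in the context. Let $e\cdot f\cdot g$ be a combinatorial 1-cycle in $\Delta$. Then for every $n\in\mathbb{Z}$, $\mathrm{Area}_{\mathcal{P}_H}(e^nf^ng^n)\le 3|n|^2$.
   Context: $\mathrm{Edge}(\Delta)$ is the set of directed edges of $\Delta$; for $e$ in it, $\iota e$, $\tau e$ are its initial and terminal vertices and $\overline{e}$ is the reversed edge. $e\cdot f\cdot g$ is a combinatorial 1-cycle if $\tau e=\iota f$, $\tau f=\iota g$, $\tau g=\iota e$. $\mathcal{P}_H=\langle\mathrm{Edge}(\Delta)\mid\mathcal{R}_H\rangle$ where $\mathcal{R}_H$ consists of the words $e\overline{e}$ ($e\in\mathrm{Edge}(\Delta)$) and $efg$, $e^{-1}f^{-1}g^{-1}$ for every combinatorial 1-cycle $e\cdot f\cdot g$. For a word $w$ representing the identity, $\mathrm{Area}_{\mathcal{P}_H}(w)$ is the least $m$ such that $w$ is freely equal to $\prod_{i=1}^m x_ir_ix_i^{-1}$ with $r_i\in\mathcal{R}_H^{\pm1}$. For a letter $e$ and $m\in\mathbb{Z}$, $e^m$ is the word of $m$ copies of $e$ if $m\ge0$ and $|m|$ copies of $e^{-1}$ if $m<0$. *)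

From HB Require Import structures.
From mathcomp Require Import all_boot all_order all_algebra.
Set Implicit Arguments. Unset Strict Implicit. Unset Printing Implicit Defensive.

(* A finite flag simplicial complex Delta is determined by its 1-skeleton:
   a finite simple graph (vertex set a finType T, symmetric irreflexive
   adjacency); the simplices are the cliques. *)
Record sgraph (T : finType) := SGraph {
  adj : rel T;
  adj_sym : symmetric adj;
  adj_irrefl : irreflexive adj }.

Section Defs.
Variables (T : finType) (G : sgraph T).

Definition Edge := {p : T * T | adj G p.1 p.2}.
Definition init_v (e : Edge) : T := (val e).1.
Definition term_v (e : Edge) : T := (val e).2.

Lemma rev_edge_proof (e : Edge) : adj G (val e).2 (val e).1.
Proof. by case: e => [[u v]] /=; rewrite adj_sym. Qed.

Definition rev_edge (e : Edge) : Edge :=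
  exist _ ((val e).2, (val e).1) (rev_edge_proof e).

Definition comb_cycle (e f g : Edge) : Prop :=
  [/\ term_v e = init_v f, term_v f = init_v g & term_v g = init_v e].

(* Words in the free group on Edge(Delta): a letter (x, b) is x if b = false
   and x^{-1} if b = true. *)
Definition letter := (Edge * bool)%type.
Definition word := seq letter.
Definition inv_letter (x : letter) : letter := (x.1, ~~ x.2).
Definition inv_word (w : word) : word := rev (map inv_letter w).

Inductive free_eq : word -> word -> Prop :=
| fe_refl w : free_eq w w
| fe_sym u v : free_eq u v -> free_eq v u
| fe_trans u v w : free_eq u v -> free_eq v w -> free_eq u w
| fe_step u v x : free_eq (u ++ x :: inv_letter x :: v) (u ++ v).

Inductive relator : word -> Prop :=
| rel_rev e : relator [:: (e, false); (rev_edge e, false)]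
| rel_tri e f g : comb_cycle e f g ->
    relator [:: (e, false); (f, false); (g, false)]
| rel_tri_inv e f g : comb_cycle e f g ->
    relator [:: (e, true); (f, true); (g, true)].

Definition relator_pm (r : word) : Prop := relator r \/ relator (inv_word r).

Definition conj_prod (l : seq (word * word)) : word :=
  flatten [seq (p.1 ++ p.2 ++ inv_word p.1) | p <- l].

(* Area_{P_H}(w) <= m : w is freely equal to a product of at most m
   conjugates of elements of R_H^{+-1} (Area is the least such number). *)
Definition area_le (w : word) (m : nat) : Prop :=
  exists l : seq (word * word),
    [/\ forall p, p \in l -> relator_pm p.2,
        size l <= m &
        free_eq w (conj_prod l)].

Definition epow (e : Edge) (m : int) : word :=
  match m with
  | Posz k => nseq k (e, false)
  | Negz k => nseq k.+1 (e, true)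
  end.

(* Simple connectivity of the (flag) complex via the edge-path group:
   elementary moves on edge paths are backtracking x y x <-> x and
   triangle moves x y z <-> x z across a 2-simplex {x,y,z}. *)
Inductive hstep : seq T -> seq T -> Prop :=
| hs_back a b x y : adj G x y ->
    hstep (a ++ [:: x; y; x] ++ b) (a ++ x :: b)
| hs_tri a b x y z : adj G x y -> adj G y z -> adj G x z ->
    hstep (a ++ [:: x; y; z] ++ b) (a ++ [:: x; z] ++ b).

Inductive hequiv : seq T -> seq T -> Prop :=
| he_refl p : hequiv p p
| he_sym p q : hequiv p q -> hequiv q p
| he_trans p q r : hequiv p q -> hequiv q r -> hequiv p r
| he_step p q : hstep p q -> hequiv p q.

Definition simply_connected : Prop :=
  (forall u v : T, exists p : seq T, path (adj G) u p /\ last u p = v) /\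
  (forall (v : T) (p : seq T), path (adj G) v p -> last v p = v ->
     hequiv (v :: p) [:: v]).

End Defs.

From mathcomp Require Import all_boot all_order all_algebra.
From mathcomp Require Import zify.

Set Implicit Arguments.
Unset Strict Implicit.
Unset Printing Implicit Defensive.

(* Write x y z for the letters of a triangle (all positive or all negative).
   The relators give x y = z^-1 = y x, so x and y commute at the cost of two
   relators, and x z = y^-1 at the cost of one.  Hence, from x^n y^n z^n,
     x^n y^n (y y^-1) z^n  ~>  x^n y^(n+1) x z^(n+1)  ~>  x^(n+1) y^(n+1) z^(n+1)
   costs 1 + 2(n+1) relators, which gives Area(x^n y^n z^n) <= n^2 + 2n. *)

Lemma nseqS_rcons (A : Type) (c : A) k : nseq k.+1 c = rcons (nseq k c) c.
Proof. by elim: k => //= k ->. Qed.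

Section Area.
Variables (T : finType) (G : sgraph T).
Implicit Types (a b u v w : word G) (x : letter G).

Lemma inv_letterK : involutive (@inv_letter _ G).
Proof. by case=> ? []. Qed.

Lemma inv_wordK : involutive (@inv_word _ G).
Proof.
move=> w; rewrite /inv_word map_rev revK -map_comp map_id_in // => x _ /=.
by rewrite inv_letterK.
Qed.

Lemma inv_word_cat u v : inv_word (u ++ v) = inv_word v ++ inv_word u.
Proof. by rewrite /inv_word map_cat rev_cat. Qed.

Lemma relator_pm_inv w : relator_pm (inv_word w) <-> relator_pm w.
Proof. by rewrite /relator_pm inv_wordK; split=> -[]; auto. Qed.

Lemma free_eq_catl a {u v} : free_eq u v -> free_eq (a ++ u) (a ++ v).
Proof.
elim=> {u v} [w|u v _ IH|u v w _ IH1 _ IH2|u v x].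
- exact: fe_refl.
- exact: fe_sym.
- exact: fe_trans IH1 IH2.
- by rewrite !catA; apply: fe_step.
Qed.

Lemma free_eq_inv_wordK a b : free_eq (inv_word a ++ a ++ b) b.
Proof.
elim: a => [|x a IH] /=; first exact: fe_refl.
rewrite /inv_word /= rev_cons -/(inv_word a) cat_rcons.
apply: fe_trans IH.
by have := fe_step (inv_word a) (a ++ b) (inv_letter x); rewrite inv_letterK.
Qed.

Lemma area_le_free_eq w w' m : free_eq w w' -> area_le w m -> area_le w' m.
Proof.
by move=> ww' [l [rl sl wl]]; exists l; split=> //; apply: fe_trans (fe_sym ww') wl.
Qed.

Lemma area_le_leq w m m' : area_le w m -> m <= m' -> area_le w m'.
Proof. by move=> [l [rl sl wl]] mm'; exists l; split=> //; apply: leq_trans mm'. Qed.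

(* The subword u is replaced by v at the cost of the conjugate
   a (u v^-1) a^-1 of a relator. *)
Lemma area_le_replace {a b u v m} : relator_pm (u ++ inv_word v) ->
  area_le (a ++ v ++ b) m -> area_le (a ++ u ++ b) m.+1.
Proof.
move=> ruv [l [rl sl wl]]; exists ((a, u ++ inv_word v) :: l); split=> //.
- by move=> p; rewrite in_cons => /orP[/eqP -> //|]; apply: rl.
- rewrite /conj_prod /= -/(conj_prod l) -!catA.
  have insert_v := free_eq_catl (a ++ u) (fe_sym (free_eq_inv_wordK v b)).
  have insert_a := free_eq_catl (a ++ u ++ inv_word v)
                                (fe_sym (free_eq_inv_wordK a (v ++ b))).
  have expand := free_eq_catl (a ++ u ++ inv_word v ++ inv_word a) wl.
  rewrite -!catA in insert_v insert_a expand.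
  exact: fe_trans insert_v (fe_trans insert_a expand).
Qed.

Variables x y z : letter G.
Hypotheses (rel_xyz : relator_pm [:: x; y; z])
           (rel_yxz : relator_pm [:: y; x; z])
           (rel_xzy : relator_pm [:: x; z; y]).

Lemma area_le_swap {a b m} : area_le (a ++ [:: y; x] ++ b) m ->
  area_le (a ++ [:: x; y] ++ b) m.+2.
Proof.
have xy_z : relator_pm ([:: x; y] ++ inv_word [:: inv_letter z]).
  by rewrite -[[:: inv_letter z]]/(inv_word [:: z]) inv_wordK.
have z_yx : relator_pm ([:: inv_letter z] ++ inv_word [:: y; x]).
  by rewrite -[[:: inv_letter z]]/(inv_word [:: z]) -inv_word_cat relator_pm_inv.
by move=> ?; apply: area_le_replace xy_z _; apply: area_le_replace z_yx _.
Qed.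

Lemma area_le_move_left {k a b m} : area_le (a ++ nseq k y ++ x :: b) m ->
  area_le (a ++ x :: nseq k y ++ b) (m + 2 * k).
Proof.
elim: k a m => [|k IH] a m moved; first by rewrite addn0.
have := IH (a ++ [:: y]) m; rewrite -!catA => /(_ moved) swapped.
by apply: area_le_leq (area_le_swap swapped) _; lia.
Qed.

Lemma area_le_nseq_triangle n :
  area_le (nseq n x ++ nseq n y ++ nseq n z) (n * n + 2 * n).
Proof.
elim: n => [|n IH]; first by exists [::]; split=> //; apply: fe_refl.
have xz_y : relator_pm ([:: x; z] ++ inv_word [:: inv_letter y]).
  by rewrite -[[:: inv_letter y]]/(inv_word [:: y]) inv_wordK.
have insert_y : area_le ((nseq n x ++ nseq n.+1 y) ++ [:: inv_letter y] ++ nseq n z)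
                        (n * n + 2 * n).
  apply: area_le_free_eq IH; apply: fe_sym.
  have := fe_step (nseq n x ++ nseq n y) (nseq n z) y.
  by rewrite nseqS_rcons -cats1 -!catA.
have := area_le_replace xz_y insert_y; rewrite -!catA => moved.
have moved_x := area_le_move_left moved.
rewrite [nseq n.+1 x]nseqS_rcons -cats1 -catA.
by apply: area_le_leq moved_x _; lia.
Qed.

End Area.

Section Triangle.
Variables (T : finType) (G : sgraph T).
Implicit Types e f g : Edge G.

Lemma comb_cycle_rot e f g : comb_cycle e f g -> comb_cycle f g e.
Proof. by case. Qed.

Lemma comb_cycle_relator_pm {e f g} b : comb_cycle e f g ->
  relator_pm [:: (e, b); (f, b); (g, b)].
Proof. by case: b => efg; left; [apply: rel_tri_inv | apply: rel_tri]. Qed.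

Lemma comb_cycle_relator_pm_rev {e f g} b : comb_cycle e f g ->
  relator_pm [:: (f, b); (e, b); (g, b)].
Proof.
move=> /comb_cycle_rot /comb_cycle_rot gef.
rewrite -relator_pm_inv; exact: comb_cycle_relator_pm (~~ b) gef.
Qed.

End Triangle.

Theorem lemma4p3 (T : finType) (G : sgraph T) (e f g : Edge G) (n : int) :
  simply_connected G ->
  comb_cycle e f g ->
  area_le (epow e n ++ epow f n ++ epow g n) (3 * `|n|%N ^ 2).
Proof.
move=> _ efg.
have triangle_bound b k : area_le (nseq k (e, b) ++ nseq k (f, b) ++ nseq k (g, b))
                                  (3 * k ^ 2).
  have gef := comb_cycle_rot (comb_cycle_rot efg).
  have := area_le_nseq_triangle (comb_cycle_relator_pm b efg)
    (comb_cycle_relator_pm_rev b efg) (comb_cycle_relator_pm_rev b gef) k.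
  by move/area_le_leq; apply; rewrite expnS expn1; nia.
by case: n => k; apply: triangle_bound.
Qed.
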